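(* Let $\beta>0$, let $E_0,\dots,E_{d-1}$ be energy levels, and let $\mathbf{p}$ be a probability vector on these levels with $\beta$-order $\pi$. For any ordering $\alpha$ of the levels, let $\mathbf{p}^\alpha=P^{(\pi,\alpha)}\mathbf{p}$. Then $\mathbf{p}^\alpha$ has $\beta$-order $\alpha$, and it is maximal in the sense that there is no probability vector $\mathbf{q}\neq\mathbf{p}^\alpha$ with $\beta$-order $\alpha$ such that $\mathbf{p}\succeq_{\rm th}\mathbf{q}\succeq_{\rm th}\mathbf{p}^\alpha$.
   Context: $\beta$-order: a permutation $\pi$ of $\{0,\dots,d-1\}$ such that $p_{\pi(0)}e^{\beta E_{\pi(0)}}\ge p_{\pi(1)}e^{\beta E_{\pi(1)}}\ge\dots$. Thermo-majorization: the thermo-majorization curve of $\mathbf{p}$ with $\beta$-order $\pi$ is the piecewise linear curve joining $(0,0)$ and the points $\big(\sum_{i=0}^k e^{-\beta E_{\pi(i)}},\sum_{i=0}^k p_{\pi(i)}\big)$, $k=0,\dots,d-1$; $\mathbf{p}\succeq_{\rm th}\mathbf{p}'$ means the curve of $\mathbf{p}$ is never below that of $\mathbf{p}'$. $\beta$-permutation matrix: set $g_m=e^{-\beta E_m}$, $X_m=\sum_{i<m}g_{\alpha(i)}$, $Y_j=\sum_{l<j}g_{\pi(l)}$, and define the $d\times d$ matrix $P^{(\pi,\alpha)}$ by $P^{(\pi,\alpha)}_{\alpha(m)|\pi(j)}=\max\{0,\min(X_{m+1},Y_{j+1})-\max(X_m,Y_j)\}/g_{\pi(j)}$ (entry in row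 $\alpha(m)$, column $\pi(j)$), acting on column probability vectors. *)

From HB Require Import structures.
From mathcomp Require Import all_boot all_order all_fingroup all_algebra.
From mathcomp Require Import all_classical all_reals all_analysis.
Set Implicit Arguments. Unset Strict Implicit. Unset Printing Implicit Defensive.
Import Order.TTheory GRing.Theory Num.Theory.
Local Open Scope ring_scope.

Section Thermo.
Variables (R : realType) (d : nat) (beta : R) (E : 'I_d -> R).

Definition gw (m : 'I_d) : R := expR (- (beta * E m)).

Definition prob_vec (p : 'I_d -> R) : Prop :=
  (forall i, 0 <= p i) /\ \sum_i p i = 1.

Definition beta_order (p : 'I_d -> R) (pi : {perm 'I_d}) : Prop :=
  forall i j : 'I_d, (i <= j)%N ->
    p (pi j) * expR (beta * E (pi j)) <= p (pi i) * expR (beta * E (pi i)).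

Definition wsum (s : {perm 'I_d}) (k : nat) : R :=
  \sum_(i < d | (i < k)%N) gw (s i).

(* The thermo-majorization curve of p w.r.t. the ordering pi, evaluated at x:
   the piecewise-linear curve joining (0,0) and the points
   (sum_{i<=k} g_{pi i}, sum_{i<=k} p_{pi i}); on the k-th segment
   [wsum pi k, wsum pi (k+1)] it interpolates linearly. *)
Definition th_curve (p : 'I_d -> R) (pi : {perm 'I_d}) (x : R) : R :=
  \sum_(k < d) p (pi k) *
     Num.min 1 (Num.max 0 ((x - wsum pi k) / gw (pi k))).

Definition Zpart : R := \sum_i gw i.

Definition thmaj (p q : 'I_d -> R) : Prop :=
  forall (pi pi' : {perm 'I_d}), beta_order p pi -> beta_order q pi' ->
    forall x, 0 <= x -> x <= Zpart -> th_curve q pi' x <= th_curve p pi x.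

Definition beta_perm_mx (pi alpha : {perm 'I_d}) : 'M[R]_d :=
  \matrix_(r, c)
    (let m := (alpha^-1)%g r in let j := (pi^-1)%g c in
     Num.max 0 (Num.min (wsum alpha m.+1) (wsum pi j.+1)
                - Num.max (wsum alpha m) (wsum pi j)) / gw (pi j)).

Definition mx_act (P : 'M[R]_d) (p : 'I_d -> R) : 'I_d -> R :=
  fun r => \sum_c P r c * p c.

End Thermo.

(* Let X_m and Y_j be the partial Gibbs sums along alpha and pi.  The entry
   of P^(pi,alpha) in row alpha(m), column pi(j) is the length of the
   intersection of [X_m, X_m+1] and [Y_j, Y_j+1], divided by g_pi(j), so the
   partial sums of p^alpha along alpha telescope to the thermo-majorization
   curve of p at the points X_m.  Moreover p^alpha_alpha(m) / g_alpha(m) is an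
   average of the slopes p_pi(j) / g_pi(j) over [X_m, X_m+1]; as these slopes
   decrease along pi, p^alpha has beta-order alpha.  Finally, a q of beta-order
   alpha with p >=_th q >=_th p^alpha has its curve pinned at every elbow X_m,
   so its partial sums along alpha are those of p^alpha, whence q = p^alpha. *)
From Pilot Require Import Defs.
From mathcomp Require Import all_boot all_order all_fingroup all_algebra.
From mathcomp Require Import all_classical all_reals all_analysis.
From mathcomp Require Import ring lra.
Import Order.TTheory GRing.Theory Num.Theory.
Local Open Scope ring_scope.
Set Implicit Arguments. Unset Strict Implicit.

Ltac no_minmax t := lazymatch t with
  | context[Num.min _ _] => fail | context[Num.max _ _] => fail | _ => idtac end.

Ltac case_minmax := repeat match goal with
  | |- context[Num.min ?a ?b] => no_minmax a; no_minmax b; case: (leP a b) => ?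
  | |- context[Num.max ?a ?b] => no_minmax a; no_minmax b; case: (leP a b) => ?
  end.

Section Overlap.
Variable R : realFieldType.
Implicit Types a b c e f g x : R.

Definition overlap a b c e : R := Num.max 0 (Num.min b e - Num.max a c).

Lemma overlapC a b c e : overlap a b c e = overlap c e a b.
Proof. by rewrite /overlap; case_minmax; lra. Qed.

Lemma overlap_ge0 a b c e : 0 <= overlap a b c e.
Proof. by rewrite /overlap; case_minmax; lra. Qed.

Lemma overlap_gt0 a b c e : 0 < overlap a b c e -> c < b /\ a < e.
Proof. by rewrite /overlap; case_minmax => *; split; lra. Qed.

Lemma overlap_cat a b c e f : c <= e -> e <= f ->
  overlap a b c e + overlap a b e f = overlap a b c f.
Proof. by rewrite /overlap => *; case_minmax; lra. Qed.

Lemma overlap_cc a b c : overlap a b c c = 0.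
Proof. by rewrite /overlap; case_minmax; lra. Qed.

Lemma overlap_sub a b c e : c <= a -> a <= b -> b <= e -> overlap a b c e = b - a.
Proof. by rewrite /overlap => *; case_minmax; lra. Qed.

Lemma overlap0_clamp x c g : 0 <= c -> 0 < g ->
  overlap 0 x c (c + g) = g * Num.min 1 (Num.max 0 ((x - c) / g)).
Proof.
move=> c_ge0 g_gt0; rewrite /overlap.
set t := (x - c) / g.
have -> : x = c + g * t by rewrite /t; field; lra.
by clearbody t; case_minmax; nra.
Qed.

End Overlap.

Lemma sum_ord_ltS (V : nmodType) (d : nat) (F : 'I_d -> V) (j : 'I_d) :
  \sum_(i < d | (i < j.+1)%N) F i = \sum_(i < d | (i < j)%N) F i + F j.
Proof.
rewrite (bigD1 j) //= addrC; congr (_ + _); apply: eq_bigl => i.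
by rewrite ltnS ltn_neqAle andbC.
Qed.

Lemma eq_from_partial_sums (V : zmodType) (d : nat) (s : {perm 'I_d}) (f h : 'I_d -> V) :
  (forall m, (m <= d)%N ->
     \sum_(i < d | (i < m)%N) f (s i) = \sum_(i < d | (i < m)%N) h (s i)) ->
  f = h.
Proof.
move=> eq_sums; apply/funext => r; rewrite -(permKV s r).
set i := (s^-1)%g r.
have := eq_sums i.+1 (ltn_ord i).
by rewrite !sum_ord_ltS eq_sums ?(ltnW (ltn_ord i)) // => /addrI.
Qed.

Section GibbsSums.
Variables (R : realType) (d : nat) (beta : R) (E : 'I_d -> R).
Local Notation gw := (gw beta E).
Local Notation wsum := (wsum beta E).

Lemma gw_gt0 m : 0 < gw m.
Proof. exact: expR_gt0. Qed.

Lemma expR_betaE m : expR (beta * E m) = (gw m)^-1.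
Proof. by rewrite /Defs.gw expRN invrK. Qed.

Lemma wsum0 s : wsum s 0 = 0.
Proof. by rewrite /Defs.wsum big_pred0. Qed.

Lemma wsumS s (j : 'I_d) : wsum s j.+1 = wsum s j + gw (s j).
Proof. by rewrite /Defs.wsum sum_ord_ltS. Qed.

Lemma le_wsum s k k' : (k <= k')%N -> wsum s k <= wsum s k'.
Proof.
move=> le_kk'; rewrite /Defs.wsum !(big_mkcond (fun i : 'I_d => (i < _)%N)) /=.
apply: ler_sum => i _; case: ifP => lt_ik; case: ifP => lt_ik' //.
- by rewrite (leq_trans lt_ik le_kk') in lt_ik'.
- exact/ltW/gw_gt0.
Qed.

Lemma wsum_ge0 s k : 0 <= wsum s k.
Proof. by rewrite -(wsum0 s) le_wsum. Qed.

Lemma wsum_full s k : (d <= k)%N -> wsum s k = Zpart beta E.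
Proof.
move=> le_dk; rewrite /Defs.wsum (eq_bigl xpredT) => [|i]; last first.
  exact: leq_trans (ltn_ord i) le_dk.
by rewrite /Zpart [RHS](reindex_inj (@perm_inj _ s)).
Qed.

Lemma wsum_le_Zpart s k : wsum s k <= Zpart beta E.
Proof. by rewrite -(wsum_full s (leq_maxr k d)) le_wsum ?leq_maxl. Qed.

Lemma sum_overlap_wsum s a b n : (n <= d)%N ->
  \sum_(j < d | (j < n)%N) overlap a b (wsum s j) (wsum s j.+1)
  = overlap a b 0 (wsum s n).
Proof.
elim: n => [|n IHn] lt_nd.
  by rewrite big_pred0 // wsum0 overlap_cc.
rewrite (sum_ord_ltS _ (Ordinal lt_nd)) /= IHn ?(ltnW lt_nd) // overlap_cat //.
  exact: wsum_ge0.
exact: le_wsum.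
Qed.

Lemma th_curve_wsum f s m :
  th_curve beta E f s (wsum s m) = \sum_(i < d | (i < m)%N) f (s i).
Proof.
rewrite /th_curve [RHS]big_mkcond; apply: eq_bigr => k _ /=.
have g_gt0 := gw_gt0 (s k).
set t := (_ - _) / _.
have le_next := le_wsum s (k := k.+1) (k' := m); rewrite wsumS in le_next.
have le_prev := le_wsum s (k := m) (k' := k).
case: ifP => lt_km.
  have t_ge1 : 1 <= t.
    by rewrite /t ler_pdivlMr // mul1r; have := le_next lt_km; lra.
  by clearbody t; rewrite (_ : Num.min _ _ = 1) ?mulr1 //; case_minmax; lra.
have t_le0 : t <= 0.
  rewrite /t ler_pdivrMr // mul0r.
  by have := le_prev; rewrite leqNgt lt_km => /(_ isT); lra.
by clearbody t; rewrite (_ : Num.min _ _ = 0) ?mulr0 //; case_minmax; lra.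
Qed.

Section BetaPermutation.
Variables (p : 'I_d -> R) (pi alpha : {perm 'I_d}).
Local Notation pa := (mx_act (beta_perm_mx beta E pi alpha) p).
Local Notation X := (wsum alpha).
Local Notation Y := (wsum pi).

Lemma beta_perm_mx_actE i :
  pa (alpha i) = \sum_(j < d) overlap (X i) (X i.+1) (Y j) (Y j.+1) / gw (pi j) * p (pi j).
Proof.
rewrite /mx_act (reindex_inj (@perm_inj _ pi)) /=; apply: eq_bigr => j _.
by rewrite mxE /= !permK.
Qed.

Lemma sum_beta_perm_mx_act m : (m <= d)%N ->
  \sum_(i < d | (i < m)%N) pa (alpha i) = th_curve beta E p pi (X m).
Proof.
move=> le_md; under eq_bigr do rewrite beta_perm_mx_actE.
rewrite exchange_big /th_curve; apply: eq_bigr => j _.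
rewrite -2!mulr_suml; under eq_bigr do rewrite overlapC.
rewrite sum_overlap_wsum // overlapC wsumS overlap0_clamp ?wsum_ge0 ?gw_gt0 //.
have := gw_gt0 (pi j); move: (gw (pi j)) (Num.min _ _) => g c g_gt0.
by field; lra.
Qed.

Lemma gw_sum_overlap i : gw (alpha i) = \sum_(j < d) overlap (X i) (X i.+1) (Y j) (Y j.+1).
Proof.
rewrite (eq_bigl (fun j : 'I_d => (j < d)%N)) => [|j]; last by rewrite ltn_ord.
rewrite sum_overlap_wsum // (wsum_full pi (leqnn d)) overlap_sub ?wsum_ge0 //.
- by rewrite wsumS; ring.
- by rewrite wsumS; have := gw_gt0 (alpha i); lra.
- exact: wsum_le_Zpart.
Qed.

Lemma beta_perm_mx_act_slopes i :
  pa (alpha i) = \sum_(j < d) overlap (X i) (X i.+1) (Y j) (Y j.+1) *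
                        (p (pi j) * expR (beta * E (pi j))).
Proof.
rewrite beta_perm_mx_actE; apply: eq_bigr => j _.
by rewrite expR_betaE mulrA mulrAC.
Qed.

Lemma le_of_overlap_gt0 i i' j j' : (i < i')%N ->
  0 < overlap (X i) (X i.+1) (Y j) (Y j.+1) ->
  0 < overlap (X i') (X i'.+1) (Y j') (Y j'.+1) -> (j <= j')%N.
Proof.
move=> lt_ii' /overlap_gt0[Yj_lt _] /overlap_gt0[_ Xi'_lt].
rewrite leqNgt; apply/negP => lt_j'j.
have := le_wsum alpha lt_ii'; have := le_wsum pi lt_j'j; lra.
Qed.

Lemma beta_order_beta_perm_mx : beta_order beta E p pi -> beta_order beta E pa alpha.
Proof.
move=> p_ord i i'; rewrite leq_eqVlt => /orP[/eqP/val_inj-> // | lt_ii'].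
pose A j := overlap (X i) (X i.+1) (Y j) (Y j.+1).
pose B j := overlap (X i') (X i'.+1) (Y j) (Y j.+1).
pose r j := p (pi j) * expR (beta * E (pi j)).
suff : pa (alpha i') * gw (alpha i) <= pa (alpha i) * gw (alpha i').
  rewrite !expR_betaE ler_pdivrMr ?gw_gt0 // mulrAC ler_pdivlMr ?gw_gt0 //.
rewrite !beta_perm_mx_act_slopes !gw_sum_overlap -/(A _) -/(B _) -/(r _).
rewrite mulr_sumr mulr_suml; apply: ler_sum => j _.
rewrite mulr_suml mulr_sumr; apply: ler_sum => j' _.
have := overlap_ge0 (X i) (X i.+1) (Y j) (Y j.+1).
have := overlap_ge0 (X i') (X i'.+1) (Y j') (Y j'.+1).
rewrite -/(A j) -/(B j') !le0r => /orP[/eqP->|B_gt0] /orP[/eqP->|A_gt0];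
  rewrite ?(mul0r, mulr0, lexx) //.
have := p_ord _ _ (le_of_overlap_gt0 lt_ii' A_gt0 B_gt0); rewrite -/(r j) -/(r j').
by have := mulr_gt0 A_gt0 B_gt0; nra.
Qed.

End BetaPermutation.
End GibbsSums.

Theorem lemma2 (R : realType) (d : nat) (beta : R) (E : 'I_d -> R)
  (p : 'I_d -> R) (pi alpha : {perm 'I_d}) :
  0 < beta -> prob_vec p -> beta_order beta E p pi ->
  let pa := mx_act (beta_perm_mx beta E pi alpha) p in
  beta_order beta E pa alpha /\
  ~ (exists q : 'I_d -> R,
       [/\ prob_vec q, q <> pa, beta_order beta E q alpha,
           thmaj beta E p q & thmaj beta E q pa]).
Proof.
move=> _ _ p_ord pa.
have pa_ord : beta_order beta E pa alpha by exact: beta_order_beta_perm_mx.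
split=> // -[q [_ q_neq q_ord p_q q_pa]]; apply: q_neq.
apply: (eq_from_partial_sums (s := alpha)) => m le_md.
have x_ge0 := wsum_ge0 beta E alpha m; have x_le := wsum_le_Zpart beta E alpha m.
have := q_pa alpha alpha q_ord pa_ord _ x_ge0 x_le.
have := p_q pi alpha p_ord q_ord _ x_ge0 x_le.
rewrite !th_curve_wsum -sum_beta_perm_mx_act // => ge_pa le_pa.
by apply/eqP; rewrite eq_le ge_pa le_pa.
Qed.
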